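(* Let $d\geq 0$ be an integer. Every $d$-degenerate graph $G$ with $n\geq d$ vertices satisfies $c(G)\leq 2^d(n-d+1)$.
   Context: All graphs are finite, simple and undirected. A graph $G$ is $d$-degenerate if every subgraph of $G$ has a vertex of degree at most $d$. A clique of a graph $G$ is a (possibly empty) set of pairwise adjacent vertices; $c(G)$ denotes the number of cliques of $G$ (including the empty clique, all single vertices and all edges). *)

From mathcomp Require Import all_boot all_order.
Set Implicit Arguments. Unset Strict Implicit. Unset Printing Implicit Defensive.

Definition simple_graph (T : finType) (e : rel T) : Prop :=
  symmetric e /\ irreflexive e.

Definition degenerate (T : finType) (e : rel T) (d : nat) : Prop :=
  forall (S : {set T}) (f : rel T),
    S != set0 -> (forall x y, f x y -> e x y) ->
    exists2 v, v \in S & #|[set u in S | f v u]| <= d.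

Definition is_clique (T : finType) (e : rel T) (K : {set T}) : bool :=
  [forall x in K, forall y in K, (x != y) ==> e x y].

(* c(G): the number of cliques (including the empty one). *)
Definition num_cliques (T : finType) (e : rel T) : nat :=
  #|[set K : {set T} | is_clique e K]|.

From mathcomp Require Import all_boot all_order.
From mathcomp Require Import zify.

(* Delete a vertex v of minimum degree (at most d). Cliques avoiding v are
   cliques of G - v; a clique through v is v together with a subset of its
   at most d neighbours, so there are at most 2^d of them. Induction down to
   d vertices, where the trivial bound 2^d applies, gives 2^d (n - d + 1). *)

Section CliquesIn.
Variables (T : finType) (e : rel T).

Definition cliques_in (S : {set T}) : {set {set T}} :=
  [set K : {set T} | (K \subset S) && is_clique e K].

Lemma num_cliquesE : num_cliques e = #|cliques_in setT|.
Proof. by apply: eq_card => K; rewrite !inE subsetT. Qed.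

Lemma card_cliques_in_exp (S : {set T}) : #|cliques_in S| <= 2 ^ #|S|.
Proof.
rewrite -card_powerset; apply: subset_leq_card; apply/subsetP => K.
by rewrite !inE => /andP[].
Qed.

Lemma card_cliques_in_avoiding (S : {set T}) (v : T) :
  #|[set K in cliques_in S | v \notin K]| <= #|cliques_in (S :\ v)|.
Proof.
apply: subset_leq_card; apply/subsetP => K.
rewrite !inE => /andP[/andP[KS ->] vK]; rewrite andbT.
apply/subsetP => x xK; rewrite !inE (subsetP KS) // andbT.
by apply: contraNneq vK => <-.
Qed.

Lemma card_cliques_in_through (S : {set T}) (v : T) :
  #|[set K in cliques_in S | v \in K]| <= 2 ^ #|[set u in S | e v u]|.
Proof.
set A := [set K in _ | _].
have delv_inj : {in A &, injective (fun K => K :\ v)}.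
  move=> K1 K2; rewrite !inE => /andP[_ v1] /andP[_ v2] E.
  by rewrite -(setD1K v1) -(setD1K v2) E.
rewrite -card_powerset -(card_in_imset delv_inj).
apply: subset_leq_card; apply/subsetP => _ /imsetP[K KA ->].
move: KA; rewrite !inE => /andP[/andP[KS Kc] vK].
apply/subsetP => x; rewrite !inE => /andP[xv xK].
rewrite (subsetP KS) //=.
by move/forall_inP: Kc => /(_ v vK) /forall_inP /(_ x xK); rewrite eq_sym xv.
Qed.

Lemma card_cliques_in_delete (S : {set T}) (v : T) :
  #|cliques_in S| <= #|cliques_in (S :\ v)| + 2 ^ #|[set u in S | e v u]|.
Proof.
rewrite -(cardsID [set K : {set T} | v \in K] (cliques_in S)) addnC.
apply: leq_add.
- apply: leq_trans (card_cliques_in_avoiding S v).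
  by apply/eq_leq/eq_card => K; rewrite !inE andbC.
- apply: leq_trans (card_cliques_in_through S v).
  by apply/eq_leq/eq_card => K; rewrite !inE andbC.
Qed.

Lemma card_cliques_in_degenerate (d : nat) (S : {set T}) :
  degenerate e d -> d <= #|S| -> #|cliques_in S| <= 2 ^ d * (#|S| - d + 1).
Proof.
move=> Hd; move: {2}#|S| (erefl #|S|) => n; elim: n S => [|n IH] S cS dn.
  by move: (card_cliques_in_exp S); rewrite cS; have -> : d = 0 by lia.
have [-> | dn'] := eqVneq d n.+1.
  by rewrite cS subnn muln1 -cS; apply: card_cliques_in_exp.
have S0 : S != set0 by apply: contra_eq_neq cS => ->; rewrite cards0.
have [v vS deg_v] := Hd S e S0 (fun _ _ h => h).
have cSv : #|S :\ v| = n by move: (cardsD1 v S); rewrite vS cS; lia.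
have dSv : d <= #|S :\ v| by rewrite cSv; lia.
have IHv := IH _ cSv dSv.
have nbhd_bound : 2 ^ #|[set u in S | e v u]| <= 2 ^ d by rewrite leq_exp2l.
have := card_cliques_in_delete S v.
rewrite cS cSv in IHv *.
have -> : n.+1 - d + 1 = (n - d + 1).+1 by lia.
rewrite mulnS; lia.
Qed.

End CliquesIn.

Theorem proposition2 (d : nat) (T : finType) (e : rel T) :
  simple_graph e -> degenerate e d -> d <= #|T| ->
  num_cliques e <= 2 ^ d * (#|T| - d + 1).
Proof.
move=> _ Hd dT; rewrite num_cliquesE -cardsT.
by apply: card_cliques_in_degenerate; rewrite // cardsT.
Qed.
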